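(* In the pure braid group $P_3$, the subgroup $Q_{\{2\}}\cap Q_{\{3\}}$ has infinite index in $Q_{\{2\}}$ and is not finitely generated.
   Context: $P_3$ denotes the pure braid group on $3$ strands, generated by $p_{1,2},p_{1,3},p_{2,3}$ subject to the relations $p_{1,2}p_{1,3}p_{2,3}=p_{1,3}p_{2,3}p_{1,2}=p_{2,3}p_{1,2}p_{1,3}$. For $S\subseteq\{1,2,3\}$, $Q_S$ is the subgroup of $P_3$ generated by the $p_{a,b}$ ($a<b$) with $a\in S$ or $b\in S$; thus $Q_{\{2\}}=\langle p_{1,2},p_{2,3}\rangle$ and $Q_{\{3\}}=\langle p_{1,3},p_{2,3}\rangle$. *)

(* The pure braid group P_3 is modelled by its presentation:
   words in the generators p12, p13, p23 and their inverses, modulo the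
   congruence generated by free cancellation and the defining relations
   p12 p13 p23 = p13 p23 p12 = p23 p12 p13.  Subgroups are predicates on
   words that are closed under this congruence. *)
From Stdlib Require Import List Bool.
Import ListNotations.

Inductive gen : Type := p12 | p13 | p23.

Definition gen_idx (g : gen) : nat * nat :=
  match g with p12 => (1, 2) | p13 => (1, 3) | p23 => (2, 3) end.

(* a letter: a generator with a sign (true = the generator, false = its inverse) *)
Definition letter := (gen * bool)%type.
Definition word := list letter.

Definition linv (a : letter) : letter := (fst a, negb (snd a)).
Definition winv (w : word) : word := rev (map linv w).
Definition pos (g : gen) : letter := (g, true).

Definition relA : word := [pos p12; pos p13; pos p23].
Definition relB : word := [pos p13; pos p23; pos p12].
Definition relC : word := [pos p23; pos p12; pos p13].

Inductive braid_rel : word -> word -> Prop :=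
| br_AB : braid_rel relA relB
| br_BC : braid_rel relB relC.

Inductive P3eq : word -> word -> Prop :=
| P3eq_refl : forall w, P3eq w w
| P3eq_sym : forall w1 w2, P3eq w1 w2 -> P3eq w2 w1
| P3eq_trans : forall w1 w2 w3, P3eq w1 w2 -> P3eq w2 w3 -> P3eq w1 w3
| P3eq_cancel : forall u v a, P3eq (u ++ [a; linv a] ++ v) (u ++ v)
| P3eq_rel : forall u v r1 r2, braid_rel r1 r2 -> P3eq (u ++ r1 ++ v) (u ++ r2 ++ v).

Definition involves (S : nat -> Prop) (g : gen) : Prop :=
  S (fst (gen_idx g)) \/ S (snd (gen_idx g)).

Definition Q (S : nat -> Prop) (w : word) : Prop :=
  exists u : word, (forall a, In a u -> involves S (fst a)) /\ P3eq w u.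

Definition Q2 : word -> Prop := Q (fun i => i = 2).
Definition Q3 : word -> Prop := Q (fun i => i = 3).

Definition sub_inter (H K : word -> Prop) : word -> Prop := fun w => H w /\ K w.

Definition has_finite_index (H K : word -> Prop) : Prop :=
  exists reps : list word,
    forall k, K k -> exists r, In r reps /\ H (winv r ++ k).

Definition finitely_generated (H : word -> Prop) : Prop :=
  exists gens : list word,
    (forall g, In g gens -> H g) /\
    forall h, H h ->
      exists l : list (word * bool),
        (forall p, In p l -> In (fst p) gens) /\
        P3eq h (concat (map (fun p : word * bool => if snd p then fst p else winv (fst p)) l)).

From Stdlib Require Import List ZArith Lia.
Import ListNotations.
Open Scope Z_scope.

(* The exponent sum of [p12] vanishes on [Q3] but takes every value [n] on
   [p12^n ∈ Q2], so no finite set of cosets of [Q2 ∩ Q3] covers [Q2].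

   For finite generation, map [P3] to the lamplighter group [Z wr Z] by
   [p12 ↦ t], [p13 ↦ δ_0 t^-1], [p23 ↦ -δ_1].  The shift [t]-exponent is
   [e12 - e13], so [Q2 ∩ Q3] lands in the base [Z^(Z)], and any finitely
   generated subgroup of the base has lamps supported below a fixed bound.
   But [p13^-m p23 p13^m] lies in [Q2 ∩ Q3] (in [Q2] because [p13 p23 p12] is
   central) and has a lamp at position [m + 1]. *)

Lemma P3eq_cong u v w1 w2 : P3eq w1 w2 -> P3eq (u ++ w1 ++ v) (u ++ w2 ++ v).
Proof.
  intros H; induction H.
  - apply P3eq_refl.
  - apply P3eq_sym; assumption.
  - eapply P3eq_trans; eassumption.
  - pose proof (P3eq_cancel (u ++ u0) (v0 ++ v) a) as K.
    rewrite <- !app_assoc in *. exact K.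
  - pose proof (P3eq_rel (u ++ u0) (v0 ++ v) r1 r2 H) as K.
    rewrite <- !app_assoc in *. exact K.
Qed.

Lemma P3eq_app w1 w2 w3 w4 : P3eq w1 w2 -> P3eq w3 w4 -> P3eq (w1 ++ w3) (w2 ++ w4).
Proof.
  intros H12 H34. apply P3eq_trans with (w2 ++ w3).
  - exact (P3eq_cong [] w3 w1 w2 H12).
  - pose proof (P3eq_cong w2 [] w3 w4 H34) as K. rewrite !app_nil_r in K. exact K.
Qed.

Lemma winv_app u v : winv (u ++ v) = winv v ++ winv u.
Proof. unfold winv. rewrite map_app, rev_app_distr. reflexivity. Qed.

Lemma length_winv w : length (winv w) = length w.
Proof. unfold winv. rewrite length_rev, length_map. reflexivity. Qed.

Lemma P3eq_app_winv w : P3eq (w ++ winv w) [].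
Proof.
  induction w as [|a w IH]; [apply P3eq_refl|].
  replace ((a :: w) ++ winv (a :: w)) with ([a] ++ (w ++ winv w) ++ [linv a])
    by (unfold winv; simpl; rewrite <- !app_assoc; reflexivity).
  eapply P3eq_trans; [apply P3eq_cong, IH|].
  exact (P3eq_cancel [] [] a).
Qed.

Fixpoint wpow (w : word) (n : nat) : word :=
  match n with O => [] | S n => w ++ wpow w n end.

Definition wsum (f : letter -> Z) (w : word) : Z :=
  fold_right (fun a acc => f a + acc) 0 w.

Definition odd_weight (f : letter -> Z) : Prop := forall a, f (linv a) = - f a.

Lemma wsum_app f u v : wsum f (u ++ v) = wsum f u + wsum f v.
Proof. induction u as [|a u IH]; simpl; [|rewrite IH]; lia. Qed.

Lemma wsum_winv f w : odd_weight f -> wsum f (winv w) = - wsum f w.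
Proof.
  intros Hf. induction w as [|a w IH]; [reflexivity|].
  change (a :: w) with ([a] ++ w). rewrite winv_app, wsum_app, IH.
  simpl. rewrite Hf. lia.
Qed.

Lemma wsum_wpow f w n : wsum f (wpow w n) = Z.of_nat n * wsum f w.
Proof. induction n as [|n IH]; cbn [wpow]; [reflexivity|]. rewrite wsum_app, IH; lia. Qed.

Lemma wsum_P3eq f w1 w2 :
  odd_weight f -> wsum f relA = wsum f relB -> wsum f relB = wsum f relC ->
  P3eq w1 w2 -> wsum f w1 = wsum f w2.
Proof.
  intros Hf HAB HBC H; induction H; try lia.
  - rewrite !wsum_app; simpl; rewrite Hf; lia.
  - rewrite !wsum_app. destruct H; lia.
Qed.

Lemma wsum_Q f S w :
  odd_weight f -> wsum f relA = wsum f relB -> wsum f relB = wsum f relC ->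
  (forall a, involves S (fst a) -> f a = 0) -> Q S w -> wsum f w = 0.
Proof.
  intros Hf HAB HBC H0 [u [Hu Hw]].
  rewrite (wsum_P3eq f _ _ Hf HAB HBC Hw). clear Hw.
  induction u as [|a u IH]; [reflexivity|]. simpl.
  rewrite H0, IH by (intros; apply Hu; simpl; auto). reflexivity.
Qed.

Definition sgn (b : bool) : Z := if b then 1 else -1.

Definition e12 (a : letter) : Z := match a with (p12, b) => sgn b | _ => 0 end.
Definition e13 (a : letter) : Z := match a with (p13, b) => sgn b | _ => 0 end.

Lemma odd_e12 : odd_weight e12. Proof. intros [[] []]; reflexivity. Qed.
Lemma odd_e13 : odd_weight e13. Proof. intros [[] []]; reflexivity. Qed.

Lemma e12_Q3 w : Q3 w -> wsum e12 w = 0.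
Proof.
  apply wsum_Q; [exact odd_e12|reflexivity|reflexivity|].
  intros [[] b] [H|H]; simpl in H; easy.
Qed.

Lemma e13_Q2 w : Q2 w -> wsum e13 w = 0.
Proof.
  apply wsum_Q; [exact odd_e13|reflexivity|reflexivity|].
  intros [[] b] [H|H]; simpl in H; easy.
Qed.

Lemma le_list_max n l : In n l -> (n <= list_max l)%nat.
Proof.
  intros Hn. assert (H : Forall (fun k => k <= list_max l)%nat l)
    by (apply list_max_le; lia).
  rewrite Forall_forall in H. exact (H n Hn).
Qed.

(* A coset [r H] meeting [k] forces [wsum f r = wsum f k], so finitely many
   cosets bound [wsum f] on [K]. *)
Lemma not_finite_index_of_unbounded f (H K : word -> Prop) :
  odd_weight f -> (forall w, H w -> wsum f w = 0) ->
  (forall n : nat, exists k, K k /\ wsum f k = Z.of_nat n) ->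
  ~ has_finite_index H K.
Proof.
  intros Hf HH HK [reps Hreps].
  set (M := list_max (map (fun r => Z.abs_nat (wsum f r)) reps)).
  destruct (HK (S M)) as [k [Kk Ek]].
  destruct (Hreps k Kk) as [r [Hr Hrk]].
  apply HH in Hrk. rewrite wsum_app, wsum_winv, Ek in Hrk by exact Hf.
  assert (HM : (Z.abs_nat (wsum f r) <= M)%nat)
    by (apply le_list_max, (in_map (fun r => Z.abs_nat (wsum f r))), Hr).
  lia.
Qed.

(** * The centre and conjugation by [p13] *)

Definition neg (g : gen) : letter := (g, false).

Definition central (c : word) : Prop := forall w, P3eq (c ++ w) (w ++ c).

Lemma central_of_letters c :
  (forall g, P3eq (c ++ [pos g]) ([pos g] ++ c)) -> central c.
Proof.
  intros Hc.
  assert (Hl : forall a, P3eq (c ++ [a]) ([a] ++ c)).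
  { intros [g []]; [apply Hc|].
    set (a := neg g).
    apply P3eq_trans with ([a; pos g] ++ c ++ [a]).
    { apply P3eq_sym. pose proof (P3eq_cancel [] (c ++ [a]) a) as K. exact K. }
    apply P3eq_trans with ([a] ++ (c ++ [pos g]) ++ [a]).
    { change (P3eq ([a] ++ ([pos g] ++ c) ++ [a]) ([a] ++ (c ++ [pos g]) ++ [a])).
      apply P3eq_cong, P3eq_sym, Hc. }
    pose proof (P3eq_cancel ([a] ++ c) [] (pos g)) as K.
    rewrite <- !app_assoc, !app_nil_r in K. rewrite <- !app_assoc. exact K. }
  intros w; induction w as [|a w IH].
  - rewrite app_nil_r; apply P3eq_refl.
  - apply P3eq_trans with ([a] ++ c ++ w).
    + pose proof (P3eq_cong [] w _ _ (Hl a)) as K.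
      rewrite <- !app_assoc in K. exact K.
    + exact (P3eq_app [a] [a] _ _ (P3eq_refl _) IH).
Qed.

Lemma central_relB : central relB.
Proof.
  apply central_of_letters; intros [].
  - apply P3eq_sym; exact (P3eq_rel [] [pos p12] _ _ br_AB).
  - apply P3eq_sym; exact (P3eq_rel [pos p13] [] _ _ br_BC).
  - eapply P3eq_trans; [exact (P3eq_rel [] [pos p23] _ _ br_BC)|].
    exact (P3eq_rel [pos p23] [] _ _ br_AB).
Qed.

(* Since [p13 p23 p12] is central, [p13^-1] and [p23 p12] induce the same
   inner automorphism. *)
Lemma conj_p13 w :
  P3eq ([neg p13] ++ w ++ winv [neg p13])
       ([pos p23; pos p12] ++ w ++ winv [pos p23; pos p12]).
Proof.
  set (c := [pos p23; pos p12]).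
  assert (Hp13 : P3eq [pos p13] (relB ++ winv c)).
  { apply P3eq_sym. eapply P3eq_trans.
    - exact (P3eq_cancel [pos p13; pos p23] [neg p23] (pos p12)).
    - exact (P3eq_cancel [pos p13] [] (pos p23)). }
  apply P3eq_trans with ([neg p13] ++ w ++ relB ++ winv c).
  { apply P3eq_app; [apply P3eq_refl|]. apply P3eq_app; [apply P3eq_refl|exact Hp13]. }
  apply P3eq_trans with (([neg p13] ++ relB) ++ w ++ winv c).
  { rewrite (app_assoc w), <- (app_assoc [neg p13]), (app_assoc relB).
    apply P3eq_cong, P3eq_sym, central_relB. }
  apply P3eq_app; [|apply P3eq_refl].
  exact (P3eq_cancel [] c (neg p13)).
Qed.

Lemma conj_wpow u c w n :
  (forall x, P3eq (u ++ x ++ winv u) (c ++ x ++ winv c)) ->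
  P3eq (wpow u n ++ w ++ winv (wpow u n)) (wpow c n ++ w ++ winv (wpow c n)).
Proof.
  intros Huc. induction n as [|n IH]; [apply P3eq_refl|]. cbn [wpow].
  set (x := wpow u n ++ w ++ winv (wpow u n)).
  set (y := wpow c n ++ w ++ winv (wpow c n)).
  replace ((u ++ wpow u n) ++ w ++ winv (u ++ wpow u n)) with (u ++ x ++ winv u)
    by (unfold x; rewrite winv_app, <- !app_assoc; reflexivity).
  replace ((c ++ wpow c n) ++ w ++ winv (c ++ wpow c n)) with (c ++ y ++ winv c)
    by (unfold y; rewrite winv_app, <- !app_assoc; reflexivity).
  eapply P3eq_trans; [apply Huc|]. apply P3eq_cong, IH.
Qed.

Definition word_over (S : nat -> Prop) (w : word) : Prop :=
  forall a, In a w -> involves S (fst a).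

Lemma word_over_app S u v : word_over S u -> word_over S v -> word_over S (u ++ v).
Proof. intros Hu Hv a Ha. apply in_app_or in Ha as [Ha|Ha]; auto. Qed.

Lemma word_over_winv S w : word_over S w -> word_over S (winv w).
Proof.
  intros Hw a Ha. unfold winv in Ha. apply in_rev, in_map_iff in Ha as [b [<- Hb]].
  exact (Hw b Hb).
Qed.

Lemma word_over_wpow S w n : word_over S w -> word_over S (wpow w n).
Proof.
  intros Hw; induction n as [|n IH]; [intros a []|].
  apply word_over_app; assumption.
Qed.

Lemma word_over_conj S u w :
  word_over S u -> word_over S w -> word_over S (u ++ w ++ winv u).
Proof.
  intros Hu Hw. apply word_over_app; [|apply word_over_app, word_over_winv]; assumption.
Qed.

Definition p23_conj (n : nat) : word :=
  wpow [neg p13] n ++ [pos p23] ++ winv (wpow [neg p13] n).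

Lemma p23_conj_inter n : sub_inter Q2 Q3 (p23_conj n).
Proof.
  split.
  - set (c := [pos p23; pos p12]).
    exists (wpow c n ++ [pos p23] ++ winv (wpow c n)). split.
    + apply word_over_conj; [apply word_over_wpow|];
        intros a Ha; repeat destruct Ha as [<-|Ha]; cbv; auto; contradiction.
    + apply conj_wpow, conj_p13.
  - exists (p23_conj n). split; [|apply P3eq_refl].
    apply word_over_conj; [apply word_over_wpow|];
      intros a Ha; repeat destruct Ha as [<-|Ha]; cbv; auto; contradiction.
Qed.

(** * A homomorphism to the lamplighter group [Z wr Z] *)

Definition dshift (a : letter) : Z :=
  match a with (p12, b) => sgn b | (p13, b) => - sgn b | (p23, _) => 0 end.
Definition shift : word -> Z := wsum dshift.

Lemma odd_dshift : odd_weight dshift.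
Proof. intros [[] []]; reflexivity. Qed.

Lemma shift_eq w : shift w = wsum e12 w - wsum e13 w.
Proof.
  unfold shift, wsum. induction w as [|[[] []] w IH]; cbn [fold_right dshift e12 e13 sgn]; lia.
Qed.

Lemma shift_inter w : sub_inter Q2 Q3 w -> shift w = 0.
Proof.
  intros [H2 H3]. rewrite shift_eq, e12_Q3, e13_Q2 by assumption. reflexivity.
Qed.

(* [w ↦ (lamp w, shift w)] is the map into [Z^(Z) ⋊ Z] sending [p12], [p13],
   [p23] to [(0, 1)], [(δ_0, -1)], [(-δ_1, 0)]. *)
Definition lamp_letter (a : letter) (i : Z) : Z :=
  match a with
  | (p12, _) => 0
  | (p13, true) => if i =? 0 then 1 else 0
  | (p13, false) => if i =? 1 then -1 else 0
  | (p23, true) => if i =? 1 then -1 else 0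
  | (p23, false) => if i =? 1 then 1 else 0
  end.

Fixpoint lamp (w : word) (i : Z) : Z :=
  match w with
  | [] => 0
  | a :: w => lamp_letter a i + lamp w (i - dshift a)
  end.

Lemma lamp_app u v i : lamp (u ++ v) i = lamp u i + lamp v (i - shift u).
Proof.
  revert i; induction u as [|a u IH]; intros i; cbn [app lamp].
  - unfold shift; simpl. rewrite Z.sub_0_r. reflexivity.
  - rewrite IH. unfold shift, wsum; cbn [fold_right].
    rewrite Z.sub_add_distr, Z.add_assoc. reflexivity.
Qed.

Ltac Zeqb_cases :=
  repeat match goal with |- context [?x =? ?y] => destruct (Z.eqb_spec x y) end; lia.

Lemma lamp_insert u r v i :
  shift r = 0 -> (forall j, lamp r j = 0) -> lamp (u ++ r ++ v) i = lamp (u ++ v) i.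
Proof. intros Hs Hl. rewrite !lamp_app, Hl, Hs, Z.sub_0_r. lia. Qed.

Lemma lamp_P3eq w1 w2 : P3eq w1 w2 -> forall i, lamp w1 i = lamp w2 i.
Proof.
  intros H; induction H; intros i; try congruence.
  - apply lamp_insert.
    + destruct a as [[] []]; reflexivity.
    + intros j; destruct a as [[] []]; simpl; Zeqb_cases.
  - assert (Hrel : forall r, r = relA \/ r = relB \/ r = relC ->
                     lamp (u ++ r ++ v) i = lamp (u ++ v) i).
    { intros r Hr; apply lamp_insert; [|intros j];
        destruct Hr as [-> | [-> | ->]]; simpl; Zeqb_cases. }
    destruct H; rewrite !Hrel; auto.
Qed.

Lemma lamp_conj u w i :
  shift w = 0 -> lamp (u ++ w ++ winv u) i = lamp w (i - shift u).
Proof.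
  intros Hw.
  pose proof (lamp_P3eq _ _ (P3eq_app_winv u) i) as K.
  rewrite lamp_app in K. rewrite !lamp_app, Hw, Z.sub_0_r.
  simpl in K. lia.
Qed.

Lemma lamp_p23_conj n : lamp (p23_conj n) (Z.of_nat n + 1) = -1.
Proof.
  unfold p23_conj. rewrite lamp_conj by reflexivity.
  unfold shift. rewrite wsum_wpow. simpl.
  replace (Z.of_nat n + 1 - Z.of_nat n * 1) with 1 by lia. reflexivity.
Qed.

Definition in_base_below (b : Z) (w : word) : Prop :=
  shift w = 0 /\ forall i, b < i -> lamp w i = 0.

Lemma in_base_below_app b u v :
  in_base_below b u -> in_base_below b v -> in_base_below b (u ++ v).
Proof.
  intros [Su Lu] [Sv Lv]. split.
  - unfold shift in *. rewrite wsum_app, Su, Sv. reflexivity.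
  - intros i Hi. rewrite lamp_app, Su, Z.sub_0_r, Lu, Lv; auto.
Qed.

Lemma lamp_above_length w i : Z.of_nat (length w) + 1 < i -> lamp w i = 0.
Proof.
  revert i; induction w as [|a w IH]; intros i Hi; [reflexivity|].
  cbn [length] in Hi. rewrite Nat2Z.inj_succ in Hi. simpl.
  rewrite IH by (destruct a as [[] []]; simpl; lia).
  destruct a as [[] []]; simpl; Zeqb_cases.
Qed.

Lemma in_base_below_length b w :
  shift w = 0 -> Z.of_nat (length w) + 1 <= b -> in_base_below b w.
Proof. intros Sw Hb. split; [exact Sw|]. intros i Hi. apply lamp_above_length. lia. Qed.

Definition gen_word (p : word * bool) : word := if snd p then fst p else winv (fst p).

Lemma in_base_below_generated b gens l :
  (forall g, In g gens -> shift g = 0 /\ Z.of_nat (length g) + 1 <= b) ->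
  (forall p, In p l -> In (fst p) gens) ->
  in_base_below b (concat (map gen_word l)).
Proof.
  intros Hgens. induction l as [|p l IH]; intros Hl.
  - split; [reflexivity|]. intros; reflexivity.
  - apply in_base_below_app; [|apply IH; intros; apply Hl; simpl; auto].
    destruct (Hgens (fst p)) as [Sg Lg]; [apply Hl; simpl; auto|].
    unfold gen_word; destruct (snd p); apply in_base_below_length; auto.
    + unfold shift in *. rewrite wsum_winv, Sg by exact odd_dshift. reflexivity.
    + rewrite length_winv. exact Lg.
Qed.

(* A finitely generated subgroup of the base of [Z wr Z] has lamps supported
   below a fixed bound. *)
Lemma not_finitely_generated_of_lamp (H : word -> Prop) :
  (forall w, H w -> shift w = 0) ->
  (forall b, exists h i, H h /\ b < i /\ lamp h i <> 0) ->
  ~ finitely_generated H.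
Proof.
  intros Hshift Hlamp [gens [Hgens Hgen]].
  set (b := Z.of_nat (list_max (map (@length letter) gens)) + 1).
  destruct (Hlamp b) as [h [i [Hh [Hi Hli]]]].
  destruct (Hgen h Hh) as [l [Hl Heq]].
  assert (Hbase : in_base_below b (concat (map gen_word l))).
  { apply (in_base_below_generated b gens); [|exact Hl].
    intros g Hg. split; [apply Hshift, Hgens, Hg|].
    assert (Hlen : (length g <= list_max (map (@length letter) gens))%nat)
      by (apply le_list_max, in_map, Hg).
    unfold b. lia. }
  apply Hli. rewrite (lamp_P3eq _ _ Heq). apply Hbase, Hi.
Qed.

Theorem mainTheorem9 :
  ~ has_finite_index (sub_inter Q2 Q3) Q2 /\ ~ finitely_generated (sub_inter Q2 Q3).
Proof.
  split.
  - apply (not_finite_index_of_unbounded e12); [exact odd_e12| |].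
    + intros w [_ H3]. exact (e12_Q3 w H3).
    + intros n. exists (wpow [pos p12] n). split.
      * exists (wpow [pos p12] n). split; [|apply P3eq_refl].
        apply word_over_wpow. intros a [<-|[]]. right. reflexivity.
      * rewrite wsum_wpow. simpl. lia.
  - apply not_finitely_generated_of_lamp; [exact shift_inter|].
    intros b. exists (p23_conj (Z.to_nat b)), (Z.of_nat (Z.to_nat b) + 1).
    split; [apply p23_conj_inter|]. split; [lia|].
    rewrite lamp_p23_conj. discriminate.
Qed.
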